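(* Let $X$ be a topological space. The following are equivalent: (1) $X$ is dense-ultraconnected; (2) for every point $x\in X$, either $\overline{\{x\}}=X$, or the only open neighborhood of $x$ in the subspace $Y_x=\{x\}\cup(X\setminus\overline{\{x\}})$ is $Y_x$ itself; (3) for any two points $x,y\in X$, $x\in\overline{\{y\}}$ or $y\in\overline{\{x\}}$.
   Context: A space is ultraconnected if it contains no two disjoint non-empty closed subsets. A space $X$ is dense-ultraconnected if every dense subset of $X$ (with the subspace topology) is ultraconnected. *)

From mathcomp Require Import all_boot all_classical.
From mathcomp Require Import topology_theory.topology_structure.
Set Implicit Arguments. Unset Strict Implicit. Unset Printing Implicit Defensive.
Local Open Scope classical_set_scope.

Definition ultraconnected (T : topologicalType) :=
  forall A B : set T, closed A -> closed B -> A !=set0 -> B !=set0 -> A `&` B !=set0.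

Definition subspace_closed (T : topologicalType) (D A : set T) :=
  exists C : set T, closed C /\ A = D `&` C.
Definition subspace_open (T : topologicalType) (D U : set T) :=
  exists V : set T, open V /\ U = D `&` V.

Definition ultraconnected_subspace (T : topologicalType) (D : set T) :=
  forall A B : set T, subspace_closed D A -> subspace_closed D B ->
    A !=set0 -> B !=set0 -> A `&` B !=set0.

Definition dense_ultraconnected (T : topologicalType) :=
  forall D : set T, dense D -> ultraconnected_subspace D.

Definition Yx (T : topologicalType) (x : T) : set T :=
  [set x] `|` ~` closure [set x].

From mathcomp Require Import all_boot all_classical.
From mathcomp Require Import topology_theory.topology_structure.
Local Open Scope classical_set_scope.

(* All three conditions of the theorem are compared with condition (3): the
   specialization preorder "x lies in the closure of {y}" is total.
   - Point closures: z is in cl{x} iff every open set containing z contains x;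
     so every closed set containing x contains cl{x}.
   - (3) -> (1): if the specialization preorder is total, EVERY subspace is
     ultraconnected: given points a in C1 and b in C2 (closed), one of them
     lies in the closure of the other, hence in both C1 and C2.
   - (1) -> (3): if x, y are incomparable, the set {x, y} together with the
     complement of cl{x} ∪ cl{y} is dense, but its traces of cl{x} and cl{y}
     are disjoint non-empty closed subsets.
   - (2) <-> (3) is checked point by point: for a fixed x, the open
     neighbourhoods of x in Y_x are all of Y_x exactly when every point
     outside cl{x} has x in its closure. *)

Section PointClosure.
Context {T : topologicalType}.

Lemma closure1_open (x z : T) (V : set T) :
  closure [set x] z -> open V -> V z -> V x.
Proof.
move=> xz oV Vz; by have [w [/= ->]] := xz V (open_nbhs_nbhs (conj oV Vz)).
Qed.

Lemma closure1_intro (x z : T) :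
  (forall V : set T, open V -> V z -> V x) -> closure [set x] z.
Proof.
move=> xV B; rewrite nbhsE => -[V [oV Vz] VB].
by exists x; split => //; apply: VB; apply: xV.
Qed.

Lemma closure1_closed (x z : T) (C : set T) :
  closed C -> C x -> closure [set x] z -> C z.
Proof.
move=> cC Cx xz; rewrite (closure_id C).1 //.
by apply: (closureS _ xz) => w /= ->.
Qed.

End PointClosure.

Definition specialization_total (T : topologicalType) :=
  forall x y : T, closure [set y] x \/ closure [set x] y.

Definition Yx_condition {T : topologicalType} (x : T) :=
  closure [set x] = setT \/
  (forall U : set T, subspace_open (Yx x) U -> U x -> U = Yx x).

Section Equivalences.
Context {T : topologicalType}.

Lemma specialization_total_ultraconnected (D : set T) :
  specialization_total T -> ultraconnected_subspace D.
Proof.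
move=> tot A B [C1 [c1 ->]] [C2 [c2 ->]] [a [Da C1a]] [b [Db C2b]].
case: (tot a b) => [ba|ab].
- by exists a; split; split => //; exact: closure1_closed c2 C2b ba.
- by exists b; split; split => //; exact: closure1_closed c1 C1a ab.
Qed.

(* For incomparable x, y this set is dense: an open set missing it would meet
   cl{x} or cl{y}, and so contain x or y. *)
Lemma dense_separating_set (x y : T) :
  dense ([set x; y] `|` ~` (closure [set x] `|` closure [set y])).
Proof.
move=> O [o Oo] oO.
have [xo|nxo] := pselect (closure [set x] o).
  by exists x; split; [exact: closure1_open xo oO Oo | left; left].
have [yo|nyo] := pselect (closure [set y] o).
  by exists y; split; [exact: closure1_open yo oO Oo | left; right].
by exists o; split => //; right => -[].
Qed.

(* (1) -> (3): for incomparable x, y, the traces of cl{x} and cl{y} on the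
   dense set above are disjoint non-empty closed subsets of it. *)
Lemma dense_ultraconnected_specialization_total :
  dense_ultraconnected T -> specialization_total T.
Proof.
move=> dU x y.
have [|nyx] := pselect (closure [set y] x); first by left.
have [|nxy] := pselect (closure [set x] y); first by right.
exfalso; pose D := [set x; y] `|` ~` (closure [set x] `|` closure [set y]).
have trace_nonempty (p : T) : D p -> D `&` closure [set p] !=set0.
  by move=> Dp; exists p; split => //; apply: subset_closure.
have trace_closed (p : T) : subspace_closed D (D `&` closure [set p]).
  by exists (closure [set p]); split => //; apply: closed_closure.
have [z [[Dz xz] [_ yz]]] := dU D (dense_separating_set x y) _ _
  (trace_closed x) (trace_closed y)
  (trace_nonempty x (or_introl (or_introl erefl)))
  (trace_nonempty y (or_introl (or_intror erefl))).
case: Dz => [[ez|ez]|nz].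
- by rewrite ez in yz.
- by rewrite ez in xz.
- by apply: nz; left.
Qed.

Lemma Yx_condition_comparable (x : T) :
  Yx_condition x -> forall y : T, closure [set y] x \/ closure [set x] y.
Proof.
case=> [-> y|Yx_trivial y]; first by right.
have [|nxy] := pselect (closure [set x] y); first by right.
left; apply: closure1_intro => V oV Vx.
have U_eq : Yx x `&` V = Yx x.
  by apply: Yx_trivial; [exists V | split => //; left].
have : (Yx x `&` V) y by rewrite U_eq; right.
by case.
Qed.

Lemma comparable_Yx_condition (x : T) :
  (forall y : T, closure [set x] y \/ closure [set y] x) -> Yx_condition x.
Proof.
move=> comp; right => U [V [oV ->]] [_ Vx].
apply/seteqP; split => [z [] //|z Yz]; split => //.
case: Yz => [-> //|nxz].
by case: (comp z) => [//|zx]; exact: closure1_open zx oV Vx.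
Qed.

End Equivalences.

Theorem theorem5p8 (T : topologicalType) :
  (dense_ultraconnected T <->
   (forall x : T, closure [set x] = setT \/
      (forall U : set T, subspace_open (Yx x) U -> U x -> U = Yx x)))
  /\
  ((forall x : T, closure [set x] = setT \/
      (forall U : set T, subspace_open (Yx x) U -> U x -> U = Yx x)) <->
   (forall x y : T, closure [set y] x \/ closure [set x] y)).
Proof.
have cond2_cond3 : (forall x : T, Yx_condition x) <-> specialization_total T.
  split=> [cond2 x y|tot x]; first exact: Yx_condition_comparable.
  by apply: comparable_Yx_condition => y; case: (tot x y); [right|left].
have cond1_cond3 : dense_ultraconnected T <-> specialization_total T.
  split; first exact: dense_ultraconnected_specialization_total.
  by move=> tot D _; apply: specialization_total_ultraconnected.
split; [split => [/cond1_cond3/cond2_cond3 //|/cond2_cond3/cond1_cond3 //]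
       | exact: cond2_cond3].
Qed.
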